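(* Let $G_0$ be the group of homeomorphisms of $\mathbb{R}$ defined in the context. The center of $G_0$ is trivial.
   Context: $G_0$ is the group of homeomorphisms of $\mathbb{R}$ generated by the following maps: - $a(t)=t+1$; - $b$, where $b(t)=t$ for $t\le 0$, $b(t)=t/(1-t)$ for $0\le t\le 1/2$, $b(t)=(3t-1)/t$ for $1/2\le t\le 1$, and $b(t)=t+1$ for $t\ge 1$; - $c$, where $c(t)=2t/(t+1)$ for $0\le t\le 1$ and $c(t)=t$ otherwise. *)

From Stdlib Require Import Reals.
Open Scope R_scope.

Definition gen_a (t : R) : R := t + 1.

Definition gen_b (t : R) : R :=
  if Rle_dec t 0 then t
  else if Rle_dec t (1/2) then t / (1 - t)
  else if Rle_dec t 1 then (3 * t - 1) / t
  else t + 1.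

Definition gen_c (t : R) : R :=
  if Rle_dec 0 t then (if Rle_dec t 1 then 2 * t / (t + 1) else t) else t.

Inductive G0 : (R -> R) -> Prop :=
| G0_id : G0 (fun t => t)
| G0_a : G0 gen_a
| G0_b : G0 gen_b
| G0_c : G0 gen_c
| G0_comp : forall f g, G0 f -> G0 g -> G0 (fun t => f (g t))
| G0_inv : forall f g, G0 f ->
    (forall t, f (g t) = t) -> (forall t, g (f t) = t) -> G0 g.

From Stdlib Require Import Reals Lra ZArith.
Open Scope R_scope.

(* Every element of G0 is strictly increasing, so it suffices that a central
   element g fixes a dense set of points.  Commuting with a and b forces
   g 0 = 0, since b fixes exactly the nonpositive reals and b t = t + 1 exactly
   for t >= 1; hence g fixes the integers.  As b (1/(j+2)) = 1/(j+1) and c maps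
   2^k/(2^k+j) to 2^(k+1)/(2^(k+1)+j), g also fixes every 2^k/(2^k+j), and
   these points together with their integer translates are dense. *)

Lemma Rdiv_lt_cross a b c d : 0 < b -> 0 < d -> a * d < c * b -> a / b < c / d.
Proof.
  intros Hb Hd H; apply (Rmult_lt_reg_r (b * d)); [nra|].
  replace (a / b * (b * d)) with (a * d) by (field; lra).
  replace (c / d * (b * d)) with (c * b) by (field; lra).
  exact H.
Qed.

Ltac cross_multiply :=
  match goal with
  | |- _ / _ < _ / _ => apply Rdiv_lt_cross
  | |- _ / _ < ?c => rewrite <- (Rdiv_1_r c); apply Rdiv_lt_cross
  | |- ?a < _ / _ => rewrite <- (Rdiv_1_r a); apply Rdiv_lt_cross
  end.

Lemma gen_b_strict_increasing : strict_increasing gen_b.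
Proof.
  intros x y Hxy; unfold gen_b.
  destruct (Rle_dec x 0), (Rle_dec y 0); try lra;
  destruct (Rle_dec x (1/2)), (Rle_dec y (1/2)); try lra;
  destruct (Rle_dec x 1), (Rle_dec y 1); try lra;
  cross_multiply; nra.
Qed.

Lemma gen_c_strict_increasing : strict_increasing gen_c.
Proof.
  intros x y Hxy; unfold gen_c.
  destruct (Rle_dec 0 x), (Rle_dec 0 y); try lra;
  destruct (Rle_dec x 1), (Rle_dec y 1); try lra;
  cross_multiply; nra.
Qed.

Lemma strict_increasing_inverse f g :
  strict_increasing f -> (forall t, f (g t) = t) -> strict_increasing g.
Proof.
  intros Hf Hfg x y Hxy.
  destruct (Rlt_or_le (g x) (g y)) as [Hlt | [Hgt | Heq]]; [exact Hlt | |].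
  - apply Hf in Hgt; rewrite !Hfg in Hgt; lra.
  - apply (f_equal f) in Heq; rewrite !Hfg in Heq; lra.
Qed.

Lemma G0_strict_increasing f : G0 f -> strict_increasing f.
Proof.
  induction 1 as [| | | | f g _ IHf _ IHg | f g _ IHf Hfg _].
  - now intros x y.
  - intros x y Hxy; unfold gen_a; lra.
  - exact gen_b_strict_increasing.
  - exact gen_c_strict_increasing.
  - intros x y Hxy; apply IHf, IHg, Hxy.
  - exact (strict_increasing_inverse f g IHf Hfg).
Qed.

Lemma strict_increasing_eq_id_of_dense_fixpoints g :
  strict_increasing g ->
  (forall u v, u < v -> exists p, g p = p /\ u < p < v) ->
  forall x, g x = x.
Proof.
  intros Hg Hdense x.
  destruct (Rtotal_order (g x) x) as [Hlt | [Heq | Hgt]]; [| exact Heq |].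
  - destruct (Hdense _ _ Hlt) as [p [Hp [Hxp Hpx]]].
    specialize (Hg p x Hpx); lra.
  - destruct (Hdense _ _ Hgt) as [p [Hp [Hxp Hpx]]].
    specialize (Hg x p Hxp); lra.
Qed.

Lemma gen_b_fixpoint_nonpos t : gen_b t = t -> t <= 0.
Proof.
  unfold gen_b; intro H.
  destruct (Rle_dec t 0); [assumption|].
  destruct (Rle_dec t (1/2)); [|destruct (Rle_dec t 1)]; exfalso.
  - assert (t = t * (1 - t)) by (rewrite <- H at 2; field; lra); nra.
  - assert (3 * t - 1 = t * t) by (rewrite <- H at 2; field; lra); nra.
  - lra.
Qed.

Lemma gen_b_shift_ge1 t : gen_b t = t + 1 -> 1 <= t.
Proof.
  unfold gen_b; intro H.
  destruct (Rle_dec t 0); [lra|].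
  destruct (Rle_dec t (1/2)); [|destruct (Rle_dec t 1)]; [exfalso | | lra].
  - assert (t = (t + 1) * (1 - t)) by (rewrite <- H; field; lra); nra.
  - assert (3 * t - 1 = (t + 1) * t) by (rewrite <- H; field; lra); nra.
Qed.

Lemma gen_b_0 : gen_b 0 = 0.
Proof. unfold gen_b; destruct (Rle_dec 0 0); lra. Qed.

Lemma gen_b_1 : gen_b 1 = 1 + 1.
Proof.
  unfold gen_b; destruct (Rle_dec 1 0), (Rle_dec 1 (1/2)), (Rle_dec 1 1); lra.
Qed.

Lemma gen_b_le_half t : 0 < t <= 1/2 -> gen_b t = t / (1 - t).
Proof.
  intros [Ht0 Ht]; unfold gen_b.
  destruct (Rle_dec t 0), (Rle_dec t (1/2)); lra.
Qed.

Lemma gen_c_unit_interval t : 0 <= t <= 1 -> gen_c t = 2 * t / (t + 1).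
Proof.
  intros [Ht0 Ht]; unfold gen_c.
  destruct (Rle_dec 0 t), (Rle_dec t 1); lra.
Qed.

Lemma exists_nat_between x : 0 <= x -> exists n, x < INR n <= x + 1.
Proof.
  intro Hx; destruct (archimed x) as [Hup Hup1].
  exists (Z.to_nat (up x)).
  rewrite INR_IZR_INZ, Z2Nat.id by (apply le_IZR; lra); lra.
Qed.

Lemma pow2_ratio_between u v :
  0 < u -> u < v -> v <= 1 ->
  exists k j, u < 2 ^ k / (2 ^ k + INR j) < v.
Proof.
  intros Hu Huv Hv.
  set (d := 1 / u - 1 / v).
  assert (Hd : 0 < d).
  { unfold d; apply Rlt_0_minus; unfold Rdiv; rewrite !Rmult_1_l.
    apply Rinv_lt_contravar; nra. }
  (* Once 2^k d > 1, the interval (2^k/v, 2^k/u) of length 2^k d contains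
     an integer 2^k + j. *)
  destruct (INR_unbounded (1 / d)) as [k Hk].
  set (K := 2 ^ k).
  assert (HK : 1 / d < K).
  { pose proof (poly k 1 Rlt_0_1) as Hpow; unfold K.
    replace (1 + 1) with 2 in Hpow by ring; lra. }
  assert (HKd : 1 < K * d).
  { apply (Rmult_lt_reg_r (/ d)); [now apply Rinv_0_lt_compat|].
    replace (K * d * / d) with K by (field; lra); lra. }
  assert (HK0 : 0 < K) by (apply pow_lt; lra).
  assert (HKv : K <= K / v).
  { apply (Rmult_le_reg_r v); [lra|].
    replace (K / v * v) with K by (field; lra); nra. }
  destruct (exists_nat_between (K / v - K)) as [j Hj]; [lra|].
  exists k, j; fold K.
  assert (Hm : 0 < K + INR j) by lra.
  split.
  - apply (Rmult_lt_reg_r ((K + INR j) / u)); [now apply Rdiv_lt_0_compat|].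
    replace (u * ((K + INR j) / u)) with (K + INR j) by (field; lra).
    replace (K / (K + INR j) * ((K + INR j) / u)) with (K / v + K * d)
      by (unfold d; field; lra).
    lra.
  - apply (Rmult_lt_reg_r ((K + INR j) / v)); [apply Rdiv_lt_0_compat; lra|].
    replace (v * ((K + INR j) / v)) with (K + INR j) by (field; lra).
    replace (K / (K + INR j) * ((K + INR j) / v)) with (K / v) by (field; lra).
    lra.
Qed.

Lemma shift_IZR_of_shift_1 (g : R -> R) :
  (forall t, g (t + 1) = g t + 1) -> forall z t, g (t + IZR z) = g t + IZR z.
Proof.
  intros Hg z; induction z as [| z IH | z IH] using Z.peano_ind; intro t.
  - now rewrite !Rplus_0_r.
  - rewrite succ_IZR, <- !Rplus_assoc, Hg, IH; ring.
  - specialize (IH t).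
    rewrite <- (Z.succ_pred z), succ_IZR, <- !Rplus_assoc, Hg in IH; lra.
Qed.

Section CentralElement.

Variable g : R -> R.
Hypothesis g_a : forall t, g (t + 1) = g t + 1.
Hypothesis g_b : forall t, g (gen_b t) = gen_b (g t).
Hypothesis g_c : forall t, g (gen_c t) = gen_c (g t).

Lemma central_fixes_0 : g 0 = 0.
Proof.
  assert (H0 : g 0 <= 0).
  { apply gen_b_fixpoint_nonpos; rewrite <- g_b, gen_b_0; reflexivity. }
  assert (H1 : 1 <= g 1).
  { apply gen_b_shift_ge1; rewrite <- g_b, gen_b_1, g_a; reflexivity. }
  rewrite <- (Rplus_0_l 1), g_a in H1; lra.
Qed.

Lemma central_fixes_of_gen_b t : g (gen_b t) = gen_b t -> g t = t.
Proof.
  rewrite g_b; intro H.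
  destruct (Rtotal_order (g t) t) as [Hlt | [Heq | Hgt]]; [| exact Heq |].
  - apply gen_b_strict_increasing in Hlt; lra.
  - apply gen_b_strict_increasing in Hgt; lra.
Qed.

Lemma central_fixes_unit_fraction j : g (1 / (1 + INR j)) = 1 / (1 + INR j).
Proof.
  induction j as [| j IH].
  - rewrite <- (Rplus_0_l (1 / (1 + INR 0))); simpl INR.
    replace (1 / (1 + 0)) with 1 by field.
    now rewrite g_a, central_fixes_0.
  - pose proof (pos_INR j) as Hj.
    apply central_fixes_of_gen_b; rewrite S_INR, gen_b_le_half.
    + replace (1 / (1 + (INR j + 1)) / (1 - 1 / (1 + (INR j + 1))))
        with (1 / (1 + INR j)) by (field; lra).
      exact IH.
    + split; [apply Rdiv_lt_0_compat; lra|].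
      apply (Rmult_le_reg_r (2 * (1 + (INR j + 1)))); [lra|].
      replace (1 / (1 + (INR j + 1)) * (2 * (1 + (INR j + 1)))) with 2
        by (field; lra).
      lra.
Qed.

Lemma central_fixes_pow2_ratio k j :
  g (2 ^ k / (2 ^ k + INR j)) = 2 ^ k / (2 ^ k + INR j).
Proof.
  induction k as [| k IH].
  - exact (central_fixes_unit_fraction j).
  - pose proof (pos_INR j) as Hj.
    assert (HK : 0 < 2 ^ k) by (apply pow_lt; lra).
    assert (Hc : gen_c (2 ^ k / (2 ^ k + INR j)) = 2 ^ S k / (2 ^ S k + INR j)).
    { rewrite gen_c_unit_interval; [simpl; field; lra|].
      split; [apply Rlt_le, Rdiv_lt_0_compat; lra|].
      apply (Rmult_le_reg_r (2 ^ k + INR j)); [lra|].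
      replace (2 ^ k / (2 ^ k + INR j) * (2 ^ k + INR j)) with (2 ^ k)
        by (field; lra).
      lra. }
    now rewrite <- Hc, g_c, IH.
Qed.

Lemma central_fixpoints_dense u v : u < v -> exists p, g p = p /\ u < p < v.
Proof.
  intro Huv.
  destruct (base_Int_part u) as [Hn Hn1].
  set (n := Int_part u) in Hn, Hn1.
  set (v' := Rmin (v - IZR n) 1).
  assert (Hv' : 0 < v' <= 1) by (split; [apply Rmin_glb_lt; lra | apply Rmin_r]).
  assert (Hvv' : v' <= v - IZR n) by apply Rmin_l.
  set (u' := Rmax (u - IZR n) (v' / 2)).
  assert (Huu' : u - IZR n <= u') by apply Rmax_l.
  assert (Hu'0 : v' / 2 <= u') by apply Rmax_r.
  assert (Hu'v' : u' < v') by (apply Rmax_lub_lt; [apply Rmin_glb_lt |]; lra).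
  destruct (pow2_ratio_between u' v') as [k [j Hp]]; [lra | exact Hu'v' | apply Hv' |].
  exists (2 ^ k / (2 ^ k + INR j) + IZR n); split.
  - now rewrite (shift_IZR_of_shift_1 g g_a), central_fixes_pow2_ratio.
  - lra.
Qed.

End CentralElement.

Theorem mainTheorem7 :
  forall g : R -> R, G0 g ->
    (forall h : R -> R, G0 h -> forall t : R, g (h t) = h (g t)) ->
    forall t : R, g t = t.
Proof.
  intros g Hg Hcentral.
  apply strict_increasing_eq_id_of_dense_fixpoints.
  - exact (G0_strict_increasing g Hg).
  - apply central_fixpoints_dense.
    + exact (Hcentral gen_a G0_a).
    + exact (Hcentral gen_b G0_b).
    + exact (Hcentral gen_c G0_c).
Qed.
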